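(* Let $\mathcal F_K^{\mathrm d}$ be the set of $F\in\mathcal F_K$ whose columns are mutually different, and let $\mathcal Q_K^{\mathrm{ua}}$ be the set of $Q\in\mathcal Q_K$ such that every column of $Q$ equals $e_k$ for some $k\in\{1,\dots,K\}$, and for every $k$ there is a column $i$ with $Q_{\star i}=e_k$. Then $\mathcal M'''=\bigcup_{K=1}^\infty\mathcal F_K^{\mathrm d}\times\mathcal Q_K^{\mathrm{ua}}=\bigcup_{K=1}^N\mathcal F_K^{\mathrm d}\times\mathcal Q_K^{\mathrm{ua}}$ and $\mathcal M'''$ is identifiable.
   Context: Fix positive integers $M$ and $N$. For a positive integer $K$, $\mathcal F_K$ is the set of real $M\times K$ matrices with all entries in $[0,1]$, and $\mathcal Q_K$ is the set of real $K\times N$ matrices with entries in $[0,1]$ each of whose columns sums to $1$. $e_k$ is the $k$-th standard basis vector of $\mathbb R^K$ and $A_{\star j}$ the $j$-th column of $A$. $(F^1,Q^1)\sim(F^2,Q^2)$ means $F^1,F^2$ have the same number $K$ of columns and there is a permutation $\pi$ of $\{1,\dots,K\}$ with $F^2_{sk}=F^1_{s\pi(k)}$ and $Q^2_{ki}=Q^1_{\pi(k)i}$ for all $s,k,i$. A set $\mathcal M$ of pairs is identifiable if for all $(F^1,Q^1),(F^2,Q^2)\in\mathcal M$, $F^1Q^1=F^2Q^2$ implies $(F^1,Q^1)\sim(F^2,Q^2)$. *)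

From HB Require Import structures.
From mathcomp Require Import all_boot all_order all_algebra.
From mathcomp Require Import reals.
Set Implicit Arguments. Unset Strict Implicit. Unset Printing Implicit Defensive.
Import Order.TTheory GRing.Theory Num.Theory.
Local Open Scope ring_scope.

Definition stdbasis (R : realType) (K : nat) (k : 'I_K) : 'cV[R]_K :=
  delta_mx k 0.

Definition inF (R : realType) (M K : nat) (F : 'M[R]_(M, K)) : Prop :=
  forall s k, 0 <= F s k <= 1.

Definition inQ (R : realType) (K N : nat) (Q : 'M[R]_(K, N)) : Prop :=
  (forall k i, 0 <= Q k i <= 1) /\ (forall i, \sum_(k < K) Q k i = 1).

Definition inFd (R : realType) (M K : nat) (F : 'M[R]_(M, K)) : Prop :=
  inF F /\ (forall k1 k2 : 'I_K, col k1 F = col k2 F -> k1 = k2).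

Definition inQua (R : realType) (K N : nat) (Q : 'M[R]_(K, N)) : Prop :=
  inQ Q /\ (forall i : 'I_N, exists k : 'I_K, col i Q = stdbasis R k)
        /\ (forall k : 'I_K, exists i : 'I_N, col i Q = stdbasis R k).

Definition pairT (R : realType) (M N : nat) : Type :=
  {K : nat & ('M[R]_(M, K) * 'M[R]_(K, N))%type}.

Definition pK (R : realType) (M N : nat) (p : pairT R M N) : nat := projT1 p.
Definition pF (R : realType) (M N : nat) (p : pairT R M N) : 'M[R]_(M, pK p) :=
  (projT2 p).1.
Definition pQ (R : realType) (M N : nat) (p : pairT R M N) : 'M[R]_(pK p, N) :=
  (projT2 p).2.

Definition pair_equiv (R : realType) (M N : nat) (p1 p2 : pairT R M N) : Prop :=
  pK p1 = pK p2 /\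
  exists pi : 'I_(pK p2) -> 'I_(pK p1), bijective pi /\
    (forall s k, pF p2 s k = pF p1 s (pi k)) /\
    (forall k i, pQ p2 k i = pQ p1 (pi k) i).

Definition identifiable (R : realType) (M N : nat) (S : pairT R M N -> Prop) : Prop :=
  forall p1 p2, S p1 -> S p2 -> pF p1 *m pQ p1 = pF p2 *m pQ p2 -> pair_equiv p1 p2.

Definition Mppp (R : realType) (M N : nat) (p : pairT R M N) : Prop :=
  (1 <= pK p)%N /\ inFd (pF p) /\ inQua (pQ p).

From HB Require Import structures.
From mathcomp Require Import all_boot all_order all_algebra.
From mathcomp Require Import reals.
Import GRing.Theory.
Local Open Scope ring_scope.

(* A matrix Q in Q_K^ua is a surjective selector: column i of F Q is column
   sg(i) of F, where Q_{*i} = e_{sg(i)} and every k is some sg(i).  Hence the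
   columns of F Q are exactly the columns of F, which forces K <= N.  If
   F1 Q1 = F2 Q2 with both F1 and F2 having distinct columns, every column of
   F2 is a column of F1 and vice versa; distinctness turns this matching into
   a permutation pi, and Q2 = Q1 permuted by pi because sg1 = pi o sg2. *)

Set Implicit Arguments.
Unset Strict Implicit.
Unset Printing Implicit Defensive.

Section Selectors.
Variable R : realType.

Lemma stdbasisE (K : nat) (k j : 'I_K) : stdbasis R k j 0 = (j == k)%:R.
Proof. by rewrite /stdbasis mxE eqxx andbT. Qed.

Lemma stdbasis_inj (K : nat) : injective (@stdbasis R K).
Proof.
move=> k1 k2 /colP/(_ k1); rewrite !stdbasisE eqxx.
by case: eqP => // _ /eqP; rewrite oner_eq0.
Qed.

Lemma col_mul_stdbasis (M K N : nat) (F : 'M[R]_(M, K)) (Q : 'M[R]_(K, N)) i k :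
  col i Q = stdbasis R k -> col i (F *m Q) = col k F.
Proof. by move=> Qi; rewrite colE -mulmxA -colE Qi -colE. Qed.

Lemma inQua_selector (K N : nat) (Q : 'M[R]_(K, N)) :
  inQua Q -> exists (sg : 'I_N -> 'I_K) (t : 'I_K -> 'I_N),
    (forall i, col i Q = stdbasis R (sg i)) /\ cancel t sg.
Proof.
case=> _ [/fin_all_exists[sg sgE] /fin_all_exists[t tE]].
by exists sg, t; split=> // k; apply: stdbasis_inj; rewrite -sgE tE.
Qed.

Lemma inQua_leq (K N : nat) (Q : 'M[R]_(K, N)) : inQua Q -> (K <= N)%N.
Proof.
case/inQua_selector=> sg [t [_ tK]].
by have := leq_card _ (can_inj tK); rewrite !card_ord.
Qed.

Lemma col_cover (M K1 K2 N : nat) (F1 : 'M[R]_(M, K1)) (Q1 : 'M[R]_(K1, N))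
    (F2 : 'M[R]_(M, K2)) (Q2 : 'M[R]_(K2, N)) sg1 sg2 t2 :
  (forall i, col i Q1 = stdbasis R (sg1 i)) ->
  (forall i, col i Q2 = stdbasis R (sg2 i)) -> cancel t2 sg2 ->
  F1 *m Q1 = F2 *m Q2 -> forall k, col k F2 = col (sg1 (t2 k)) F1.
Proof.
move=> sg1E sg2E t2K eqFQ k.
by rewrite -(col_mul_stdbasis F1 (sg1E _)) eqFQ (col_mul_stdbasis F2 (sg2E _)) t2K.
Qed.

End Selectors.

Lemma cols_match_cancel (T : Type) (m K1 K2 : nat) (A : 'M[T]_(m, K1))
    (B : 'M[T]_(m, K2)) (f : 'I_K1 -> 'I_K2) (g : 'I_K2 -> 'I_K1) :
  (forall k, col k A = col (f k) B) -> (forall k, col k B = col (g k) A) ->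
  (forall k k', col k A = col k' A -> k = k') -> cancel f g.
Proof. by move=> Af Bg Ainj k; apply: Ainj; rewrite -Bg -Af. Qed.

Lemma identifiable_Mppp (R : realType) (M N : nat) : identifiable (@Mppp R M N).
Proof.
move=> [K1 [F1 Q1]] [K2 [F2 Q2]] [_ [[_ F1inj] Q1ua]] [_ [[_ F2inj] Q2ua]].
rewrite /pair_equiv /pK /pF /pQ /= => eqFQ.
have [sg1 [t1 [sg1E t1K]]] := inQua_selector Q1ua.
have [sg2 [t2 [sg2E t2K]]] := inQua_selector Q2ua.
pose pi := sg1 \o t2; pose pi' := sg2 \o t1.
have F2_pi k : col k F2 = col (pi k) F1 := col_cover sg1E sg2E t2K eqFQ k.
have F1_pi' k : col k F1 = col (pi' k) F2 := col_cover sg2E sg1E t1K (esym eqFQ) k.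
have piK : cancel pi pi' := cols_match_cancel F2_pi F1_pi' F2inj.
have pi'K : cancel pi' pi := cols_match_cancel F1_pi' F2_pi F1inj.
have sg1_pi i : sg1 i = pi (sg2 i).
  apply: F1inj; rewrite -F2_pi -(col_mul_stdbasis F1 (sg1E i)) eqFQ.
  exact: col_mul_stdbasis.
have pi_bij : bijective pi by exists pi'.
split; first by have := bij_eq_card pi_bij; rewrite !card_ord.
exists pi; split=> //; split=> [s k | k i].
  by have /colP/(_ s) := F2_pi k; rewrite !mxE.
have /colP/(_ k) := sg2E i; have /colP/(_ (pi k)) := sg1E i.
by rewrite !stdbasisE !mxE sg1_pi (inj_eq (can_inj piK)) => -> ->.
Qed.

Unset Implicit Arguments.

Theorem mainTheorem7 (R : realType) (M N : nat) (hM : (0 < M)%N) (hN : (0 < N)%N) :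
  (forall p : pairT R M N,
     Mppp p <-> ((1 <= pK p <= N)%N /\ inFd (pF p) /\ inQua (pQ p)))
  /\ identifiable (@Mppp R M N).
Proof.
split; last exact: identifiable_Mppp.
move=> p; split=> [[K_gt0 [Fd Qua]] | [/andP[K_gt0 _] FdQua]]; last by split.
by rewrite K_gt0 (inQua_leq Qua).
Qed.
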